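(* Let $\mathcal{A}$ be a finite list of elements of a finitely generated abelian group $\Gamma$, let $G$ be a torsion-wise finite abelian group, and suppose $\mathcal{A}\subset\Gamma_{\mathrm{tor}}$. Then $$T^G_{\mathcal{A}}(x,y)=\sum_{k=0}^{\#\mathcal{A}}\Bigg(\sum_{\substack{\mathcal{S}\subset\mathcal{A}\\ \#\mathcal{S}=k}}\#\mathcal{M}(\mathcal{A}/\mathcal{S};\Gamma_{\mathrm{tor}}/\langle\mathcal{S}\rangle,G)\Bigg)y^k.$$ In particular $T^G_{\mathcal{A}}(x,y)$ is a polynomial in $y$ alone whose coefficients are non-negative integers.
   Context: $G$ is torsion-wise finite if $G[d]=\{x\in G\mid dx=0\}$ is finite for all $d>0$. Sublists are distinguished by index. $r_{\mathcal{S}}$ is the rank of $\langle\mathcal{S}\rangle$, $m(\mathcal{S};G)=\#\mathrm{Hom}((\Gamma/\langle\mathcal{S}\rangle)_{\mathrm{tor}},G)$, $T^G_{\mathcal{A}}(x,y)=\sum_{\mathcal{S}\subset\mathcal{A}}m(\mathcal{S};G)(x-1)^{r_{\mathcal{A}}-r_{\mathcal{S}}}(y-1)^{\#\mathcal{S}-r_{\mathcal{S}}}$. For a list $\mathcal{B}$ in an abelian group $\Lambda$, $\mathcal{M}(\mathcal{B};\Lambda,G)=\mathrm{Hom}(\Lambda,G)\smallsetminus\bigcup_{\beta\in\mathcal{B}}\{\varphi\mid\varphi(\beta)=0\}$; the contraction $\mathcal{A}/\mathcal{S}$ is the list of cosets $\{\overline\alpha\mid\alpha\in\mathcal{A}\smallsetminus\mathcal{S}\}$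 in $\Gamma_{\mathrm{tor}}/\langle\mathcal{S}\rangle$. *)

From HB Require Import structures.
From mathcomp Require Import all_boot all_order all_algebra.
From Stdlib Require Import ClassicalEpsilon.
Set Implicit Arguments. Unset Strict Implicit. Unset Printing Implicit Defensive.
Import Order.TTheory GRing.Theory Num.Theory.
Local Open Scope ring_scope.

Section Defs.
Variables (Gam G : zmodType).

Definition fin_gen : Prop :=
  exists gens : seq Gam, forall x, exists c : 'I_(size gens) -> int,
    x = \sum_(i < size gens) gens`_i *~ c i.

Definition torsionwise_finite : Prop :=
  forall d : nat, (0 < d)%N -> exists s : seq G, forall x : G, x *+ d = 0 -> x \in s.

Definition torsion (x : Gam) : Prop := exists n : nat, (0 < n)%N /\ x *+ n = 0.

Variable A : seq Gam.

Definition in_span (S : {set 'I_(size A)}) (x : Gam) : Prop :=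
  exists c : 'I_(size A) -> int, x = \sum_(i in S) A`_i *~ c i.

Definition Zindep (l : seq Gam) : Prop :=
  forall c : 'I_(size l) -> int, \sum_(i < size l) l`_i *~ c i = 0 -> forall i, c i = 0.

Definition rank_is (S : {set 'I_(size A)}) (r : nat) : Prop :=
  (exists l : seq Gam, size l = r /\ (forall x, x \in l -> in_span S x) /\ Zindep l) /\
  (forall l : seq Gam, (forall x, x \in l -> in_span S x) -> Zindep l -> (size l <= r)%N).

Definition rk (S : {set 'I_(size A)}) : nat := epsilon (inhabits 0%N) (rank_is S).

Definition hom_on (P : Gam -> Prop) (f : Gam -> G) : Prop :=
  forall a b, P a -> P b -> f (a - b) = f a - f b.

(* number of maps satisfying Q, counted up to agreement on P, is n *)
Definition card_mod (P : Gam -> Prop) (Q : (Gam -> G) -> Prop) (n : nat) : Prop :=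
  exists fs : seq (Gam -> G), size fs = n /\
    (forall i, (i < n)%N -> Q (nth (fun _ => 0) fs i)) /\
    (forall i j, (i < n)%N -> (j < n)%N -> i <> j ->
       exists a, P a /\ nth (fun _ => 0) fs i a <> nth (fun _ => 0) fs j a) /\
    (forall f, Q f -> exists2 i, (i < n)%N & forall a, P a -> f a = nth (fun _ => 0) fs i a).

Definition count_mod (P : Gam -> Prop) (Q : (Gam -> G) -> Prop) : nat :=
  epsilon (inhabits 0%N) (card_mod P Q).

(* the subgroup of Gamma that is the preimage of (Gamma/<S>)_tor *)
Definition tor_mod (S : {set 'I_(size A)}) (x : Gam) : Prop :=
  exists n : nat, (0 < n)%N /\ in_span S (x *+ n).

(* m(S;G) = #Hom((Gamma/<S>)_tor, G): homs on tor_mod S vanishing on <S> *)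
Definition mSG (S : {set 'I_(size A)}) : nat :=
  count_mod (tor_mod S) (fun f => hom_on (tor_mod S) f /\ forall a, in_span S a -> f a = 0).

(* #M(A/S; Gamma_tor/<S>, G): homs Gamma_tor/<S> -> G nonzero on all cosets of alpha in A \ S *)
Definition McountS (S : {set 'I_(size A)}) : nat :=
  count_mod torsion (fun f => hom_on torsion f /\ (forall a, in_span S a -> f a = 0) /\
     forall i : 'I_(size A), i \notin S -> f A`_i <> 0).

Definition TutteG (R : comNzRingType) (x y : R) : R :=
  \sum_(S : {set 'I_(size A)})
    (mSG S)%:R * (x - 1) ^+ (rk setT - rk S) * (y - 1) ^+ (#|S| - rk S).

End Defs.

(* Every element of A is torsion, so each <S> is a torsion group: all ranks vanish and
   T^G_A(x,y) = sum_S m(S;G) (y-1)^#S.  Both m(S;G) and #M(A/S; Gamma_tor/<S>, G) count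
   homomorphisms f : Gamma_tor -> G, sorted by their zero set Z(f) = {i | f(alpha_i) = 0}:
   the former those with S \subset Z(f), the latter those with Z(f) = S.  Exchanging the
   sums, T^G_A(x,y) = sum_f sum_(S \subset Z(f)) (y-1)^#S = sum_f y^#Z(f), which is the
   right-hand side grouped by #Z(f).  All counts are finite: Gamma_tor is finite since Gamma
   is finitely generated, hence it has an exponent e, and every f takes values in G[e]. *)

From mathcomp Require Import all_boot all_order all_algebra.
From mathcomp Require Import boolp.
From Stdlib Require Import ClassicalEpsilon.
Import GRing.Theory.
Set Implicit Arguments. Unset Strict Implicit. Unset Printing Implicit Defensive.
Local Open Scope ring_scope.

Lemma functional_rel_finite (T U : eqType) (R : T -> U -> Prop) (s' : seq T) :
  (forall t u v, R t u -> R t v -> u = v) ->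
  exists s : seq U, forall t u, t \in s' -> R t u -> u \in s.
Proof.
move=> Rfun; elim: s' => [|t0 s' [s hs]]; first by exists [::].
have [[u0 hu0]|noR] := pselect (exists u, R t0 u).
  exists (u0 :: s) => t u; rewrite inE => /predU1P[-> hu|ht hu].
    by rewrite (Rfun _ _ _ hu hu0) mem_head.
  by rewrite inE (hs t u ht hu) orbT.
exists s => t u; rewrite inE => /predU1P[-> hu|]; last exact: hs.
by case: noR; exists u.
Qed.

Section ZSpan.
Variable Gam : zmodType.
Implicit Types (l h : seq Gam) (g t x y : Gam).

Fixpoint zspan l x : Prop :=
  if l is g :: l' then exists k : int, zspan l' (x - g *~ k) else x = 0.

Lemma zspan0 l : zspan l 0.
Proof. by elim: l => [|g l IH] //=; exists 0; rewrite mulr0z subr0. Qed.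

Lemma zspanB l x y : zspan l x -> zspan l y -> zspan l (x - y).
Proof.
elim: l x y => [|g l IH] x y /=; first by move=> -> ->; rewrite subr0.
move=> [k hk] [m hm]; exists (k - m); have := IH _ _ hk hm.
by rewrite mulrzBr opprB opprD opprK !addrA addrAC (addrAC x).
Qed.

Lemma zspanN l x : zspan l x -> zspan l (- x).
Proof. by move=> hx; rewrite -sub0r; apply: zspanB => //; apply: zspan0. Qed.

Lemma zspanD l x y : zspan l x -> zspan l y -> zspan l (x + y).
Proof. by move=> hx hy; rewrite -[y]opprK; apply/zspanB/zspanN. Qed.

Lemma zspanMz l x k : zspan l x -> zspan l (x *~ k).
Proof.
elim: l x => [|g l IH] x /=; first by move=> ->; rewrite mul0rz.
by move=> [m hm]; exists (m * k); have := IH _ hm; rewrite mulrzBl mulrzA.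
Qed.

Lemma zspanMn l x n : zspan l x -> zspan l (x *+ n).
Proof. by rewrite -mulrz_nat; apply: zspanMz. Qed.

Lemma zspan_cons l g x : zspan l x -> zspan (g :: l) x.
Proof. by exists 0; rewrite mulr0z subr0. Qed.

Lemma zspan_head l g k : zspan (g :: l) (g *~ k).
Proof. by exists k; rewrite subrr; apply: zspan0. Qed.

Lemma zspan_sum l (c : 'I_(size l) -> int) : zspan l (\sum_(i < size l) l`_i *~ c i).
Proof.
elim: l c => [|g l IH] c /=; first by rewrite big_ord0.
exists (c ord0); rewrite big_ord_recl /= addrAC subrr add0r.
exact: (IH (fun i => c (lift ord0 i))).
Qed.

(* [torsion_mod [::]] is convertible to [torsion]. *)
Definition torsion_mod h x := exists n : nat, (0 < n)%N /\ zspan h (x *+ n).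

Lemma torsion_mod0 h : torsion_mod h 0.
Proof. by exists 1%N; rewrite mul0rn; split=> //; apply: zspan0. Qed.

Lemma torsion_modB h x y : torsion_mod h x -> torsion_mod h y -> torsion_mod h (x - y).
Proof.
move=> [n [n0 hn]] [m [m0 hm]]; exists (n * m)%N; rewrite muln_gt0 n0 m0.
split=> //; rewrite mulrnBl; apply: zspanB; first by rewrite mulrnA; apply: zspanMn.
by rewrite mulnC mulrnA; apply: zspanMn.
Qed.

Lemma torsion_modD h x y : torsion_mod h x -> torsion_mod h y -> torsion_mod h (x + y).
Proof.
move=> hx hy; rewrite -[y]opprK -[- y]sub0r.
by apply: torsion_modB => //; apply: torsion_modB => //; apply: torsion_mod0.
Qed.

Lemma torsion_modMz h x k : torsion_mod h x -> torsion_mod h (x *~ k).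
Proof.
move=> [n [n0 hn]]; exists n; split=> //.
by rewrite -mulrz_nat -mulrzA mulrC mulrzA mulrz_nat; apply: zspanMz.
Qed.

Lemma zspan_torsion_mod h x : zspan h x -> torsion_mod h x.
Proof. by exists 1%N; rewrite mulr1n. Qed.

Lemma torsion_mod_cons h g x : torsion_mod h x -> torsion_mod (g :: h) x.
Proof. by move=> [n [n0 hn]]; exists n; split=> //; apply: zspan_cons. Qed.

Lemma torsion_mod_Mz_eq0 h g k : ~ torsion_mod h g -> torsion_mod h (g *~ k) -> k = 0.
Proof.
move=> gfree [n [n0 hn]]; have [//|k0] := eqVneq k 0; case: gfree.
have kn0 : k * n%:Z != 0 by rewrite mulf_neq0 // -lt0n.
exists (absz (k * n%:Z)); split; first by rewrite absz_gt0.
suff -> : g *+ (absz (k * n%:Z)) = g *~ k *+ n *~ sgz (k * n%:Z) by apply: zspanMz.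
rewrite -[LHS]mulrz_nat -[g *~ k *+ n]mulrz_nat -!mulrzA; congr (_ *~ _).
by rewrite !natz abszEsg mulrC -mulrA.
Qed.

(* For [h = [::]] and [l] generating [Gam], this says that [Gam] has finite torsion.
   Induct on [l]: a generator of finite order modulo <h> only contributes finitely many
   multiples, and one of infinite order can be moved into [h]. *)
Definition torsion_classes_finite l h := exists s : seq Gam,
  forall x, zspan l x -> torsion_mod h x -> exists2 t, t \in s & zspan h (x - t).

Lemma torsion_classes_finite_nil h : torsion_classes_finite [::] h.
Proof.
exists [:: 0] => x /= -> _; exists 0; first exact: mem_head.
by rewrite subr0; apply: zspan0.
Qed.

Lemma torsion_classes_finite_cons_torsion l h g :
  torsion_mod h g -> torsion_classes_finite l h -> torsion_classes_finite (g :: l) h.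
Proof.
move=> gtor [s hs]; have [d [d0 hd]] := gtor.
exists [seq g *+ r + t | r <- iota 0 d, t <- s] => x [k hk] hx.
have [t ts ht] := hs _ hk (torsion_modB hx (torsion_modMz k gtor)).
pose r := absz (k %% d%:Z)%Z.
have hr : r%:Z = (k %% d%:Z)%Z by rewrite /r gez0_abs // modz_ge0 // -lt0n.
have ek : g *~ k = (g *+ d) *~ (k %/ d%:Z)%Z + g *+ r.
  by rewrite {1}(divz_eq k d%:Z) mulrzDr -hr mulrzA mulrzAC.
exists (g *+ r + t).
  apply/allpairsP; exists (r, t); split=> //.
  by rewrite mem_iota add0n -ltz_nat hr ltz_pmod.
have -> : x - (g *+ r + t) = x - g *~ k - t + (g *~ k - g *+ r).
  by rewrite addrAC subrKA opprD addrA.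
by apply: zspanD => //; rewrite ek addrK; apply: zspanMz.
Qed.

Lemma torsion_classes_finite_cons_free l h g :
  ~ torsion_mod h g -> torsion_classes_finite l (g :: h) -> torsion_classes_finite (g :: l) h.
Proof.
move=> gfree [s' hs'].
pose R t w := exists j, w = g *~ j + t /\ torsion_mod h w.
have Rfun t u v : R t u -> R t v -> u = v.
  move=> [j [-> hj]] [j' [-> hj']].
  have : torsion_mod h (g *~ (j - j')).
    rewrite mulrzBr -[_ - _](addrKA t) [t + _]addrC.
    exact: torsion_modB.
  by move/(torsion_mod_Mz_eq0 gfree)/eqP; rewrite subr_eq0 => /eqP ->.
have [s hs] := functional_rel_finite s' Rfun.
exists s => x [k hk] hx.
have xk_tor : torsion_mod (g :: h) (x - g *~ k).
  exact: torsion_modB (torsion_mod_cons g hx) (zspan_torsion_mod (zspan_head h g k)).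
have [t ts [m hm]] := hs' _ hk xk_tor.
pose w := g *~ (k + m) + t.
have ew : x - w = x - g *~ k - t - g *~ m.
  by rewrite /w mulrzDr !opprD !addrA addrAC.
have w_tor : torsion_mod h w.
  rewrite -[w](subKr x); apply: torsion_modB hx (zspan_torsion_mod _).
  by rewrite ew.
exists w; last by rewrite ew.
by apply: hs ts _; exists (k + m).
Qed.

Lemma torsion_classes_finiteP l h : torsion_classes_finite l h.
Proof.
elim: l h => [|g l IH] h; first exact: torsion_classes_finite_nil.
have [gtor|gfree] := pselect (torsion_mod h g).
  exact: torsion_classes_finite_cons_torsion.
exact: torsion_classes_finite_cons_free.
Qed.
End ZSpan.

Section Torsion.
Variable Gam : zmodType.
Implicit Types x y : Gam.

Lemma torsion_enum : fin_gen Gam ->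
  exists2 ts : seq Gam, uniq ts & forall x, torsion x <-> x \in ts.
Proof.
move=> [gens hgens]; have [s hs] := torsion_classes_finiteP gens [::].
exists (undup [seq x <- s | `[< torsion x >]]) => [|x]; first exact: undup_uniq.
rewrite mem_undup mem_filter; split=> [tx|/andP[/asboolP //]].
have [c xE] := hgens x.
have [t ts /subr0_eq xt] := hs x (eq_ind_r (zspan gens) (zspan_sum c) xE) tx.
by rewrite xt ts andbT; apply/asboolP; rewrite -xt.
Qed.

Lemma torsion0 : @torsion Gam 0.
Proof. exact: (torsion_mod0 [::]). Qed.

Lemma torsionB x y : torsion x -> torsion y -> torsion (x - y).
Proof. exact: (@torsion_modB _ [::]). Qed.

Lemma torsionD x y : torsion x -> torsion y -> torsion (x + y).
Proof. exact: (@torsion_modD _ [::]). Qed.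

Lemma torsionMz x k : torsion x -> torsion (x *~ k).
Proof. exact: (@torsion_modMz _ [::]). Qed.

Lemma torsion_exponent (ts : seq Gam) : (forall x, x \in ts -> torsion x) ->
  exists2 e, (0 < e)%N & forall x, x \in ts -> x *+ e = 0.
Proof.
elim: ts => [|t ts IH] tor; first by exists 1%N.
have [e e0 he] := IH (fun x xts => tor x (mem_behead (s := t :: ts) xts)).
have [n [n0 hn]] := tor t (mem_head t ts).
exists (n * e)%N => [|x]; first by rewrite muln_gt0 n0.
rewrite inE => /predU1P[->|xts]; first by rewrite mulrnA hn mul0rn.
by rewrite mulnC mulrnA he ?mul0rn.
Qed.
End Torsion.
Arguments torsion0 {Gam}.

Section CountMod.
Variables (Gam G : zmodType) (P : Gam -> Prop).

Lemma card_mod_le (Q : (Gam -> G) -> Prop) n m :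
  card_mod P Q n -> card_mod P Q m -> (n <= m)%N.
Proof.
move=> [fs [_ [Qfs [fs_diff _]]]] [fs' [_ [_ [_ fs'_cover]]]].
have /fin_all_exists[phi phiP] : forall i : 'I_n, exists j : 'I_m,
    forall a, P a -> nth (fun _ => 0) fs i a = nth (fun _ => 0) fs' j a.
  by move=> i; have [j jm fj] := fs'_cover _ (Qfs _ (ltn_ord i)); exists (Ordinal jm).
have phi_inj : injective phi.
  move=> i i' phi_ii'; apply/val_inj/eqP/contraT => /eqP ii'.
  have [a [Pa []]] := fs_diff _ _ (ltn_ord i) (ltn_ord i') ii'.
  by rewrite (phiP i a Pa) (phiP i' a Pa) phi_ii'.
by have := leq_card phi phi_inj; rewrite !card_ord.
Qed.

Lemma card_mod_unique (Q : (Gam -> G) -> Prop) n m :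
  card_mod P Q n -> card_mod P Q m -> n = m.
Proof. by move=> hn hm; apply/anti_leq; rewrite !(card_mod_le hn hm, card_mod_le hm hn). Qed.

Variables (ts : seq Gam) (gs : seq G).
Hypotheses (ts_uniq : uniq ts) (tsP : forall a, P a <-> a \in ts).

Fixpoint words n : seq (seq G) :=
  if n is n'.+1 then [seq a :: v | a <- gs, v <- words n'] else [:: [::]].

Lemma size_words n v : v \in words n -> size v = n.
Proof.
elim: n v => [|n IH] v /=; first by rewrite inE => /eqP ->.
by move=> /allpairsP[[a w] [_ /= /IH <- ->]].
Qed.

Lemma words_mem v : all (mem gs) v -> v \in words (size v).
Proof. by elim: v => [|a v IH] //= /andP[ags /IH vw]; apply/allpairsP; exists (a, v). Qed.

Definition lookup (v : seq G) (x : Gam) : G := nth 0 v (index x ts).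

Lemma lookup_map f x : x \in ts -> lookup (map f ts) x = f x.
Proof. by move=> xts; rewrite /lookup (nth_map 0) ?index_mem // nth_index. Qed.

Lemma map_lookup v : size v = size ts -> map (lookup v) ts = v.
Proof.
move=> sv; apply: (eq_from_nth (x0 := 0)); rewrite size_map // => i its.
by rewrite (nth_map 0) // /lookup index_uniq.
Qed.

Section Counting.
Variable Q : (Gam -> G) -> Prop.
Hypothesis Q_ext : forall f g, (forall a, P a -> f a = g a) -> Q f -> Q g.
Hypothesis Q_val : forall f, Q f -> forall a, P a -> f a \in gs.

Lemma card_mod_words :
  card_mod P Q (count (fun v => `[< Q (lookup v) >]) (undup (words (size ts)))).
Proof.
set W := [seq v <- undup (words (size ts)) | `[< Q (lookup v) >]].
have W_uniq : uniq W by rewrite filter_uniq // undup_uniq.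
have WP v : v \in W -> Q (lookup v) /\ size v = size ts.
  by rewrite mem_filter mem_undup => /andP[/asboolP Qv /size_words].
rewrite -size_filter -/W; exists (map lookup W); rewrite size_map.
split=> //; split; [|split].
- by move=> i iW; rewrite (nth_map [::]) //; case: (WP _ (mem_nth [::] iW)).
- move=> i j iW jW ij; rewrite !(nth_map [::]) //.
  have : nth [::] W i != nth [::] W j by rewrite nth_uniq //; apply/eqP.
  set vi := nth [::] W i; set vj := nth [::] W j.
  have [[_ si] [_ sj]] := (WP vi (mem_nth [::] iW), WP vj (mem_nth [::] jW)).
  rewrite -{1}(map_lookup si) -{1}(map_lookup sj) => Wij.
  have /hasP[a ats lij] : has (fun a => lookup vi a != lookup vj a) ts.
    by apply: contraNT Wij => /hasPn same; apply/eqP/eq_in_map => a /same/negPn/eqP.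
  by exists a; split; [apply/tsP | apply/eqP].
- move=> f Qf; have fW : map f ts \in W.
    rewrite mem_filter mem_undup; apply/andP; split.
      by apply/asboolP; apply: Q_ext Qf => a /tsP ats; rewrite lookup_map.
    rewrite -[X in words X](size_map f); apply: words_mem.
    by apply/allP => _ /mapP[a ats ->]; apply: Q_val Qf _ _; apply/tsP.
  exists (index (map f ts) W); first by rewrite index_mem.
  by move=> a /tsP ats; rewrite (nth_map [::]) ?index_mem // nth_index // lookup_map.
Qed.

Lemma count_modE :
  count_mod P Q = count (fun v => `[< Q (lookup v) >]) (undup (words (size ts))).
Proof.
exact: card_mod_unique (epsilon_spec _ _ (ex_intro _ _ card_mod_words)) card_mod_words.
Qed.
End Counting.
End CountMod.

Section SetSums.
Variables (R : comPzRingType) (I : finType).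

Lemma sum_subset_expB1 (Z : {set I}) (y : R) :
  \sum_(S : {set I} | S \subset Z) (y - 1) ^+ #|S| = y ^+ #|Z|.
Proof.
pose F i : R := if i \in Z then y - 1 else 0.
have -> : y ^+ #|Z| = \prod_i (F i + 1).
  rewrite -prodr_const big_mkcond /=; apply: eq_bigr => i _.
  by rewrite /F; case: (i \in Z); rewrite ?subrK ?add0r.
rewrite bigA_distr big_mkcond /=; apply: eq_bigr => S _.
rewrite -[in RHS]big_mkcond /=.
have [SZ|/subsetPn[i iS iZ]] := boolP (S \subset Z).
  by rewrite -prodr_const; apply: eq_bigr => i /(subsetP SZ); rewrite /F => ->.
by rewrite (bigD1 i) //= /F (negbTE iZ) mul0r.
Qed.

Lemma sum_by_card n (F : {set I} -> R) : (#|I| <= n)%N ->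
  \sum_(k < n.+1) \sum_(S : {set I} | #|S| == k) F S = \sum_(S : {set I}) F S.
Proof.
move=> In; rewrite [RHS](partition_big (fun S : {set I} => inord #|S| : 'I_n.+1) xpredT) //.
apply: eq_bigr => k _; apply: eq_bigl => S.
by rewrite -val_eqE /= inordK // ltnS (leq_trans (max_card _) In).
Qed.

Lemma sum_count_exchange (T : Type) (V : seq T) (p : pred T) (r : T -> pred I) (F : I -> R) :
  \sum_i (count (fun v => p v && r v i) V)%:R * F i = \sum_(v <- V | p v) \sum_(i | r v i) F i.
Proof.
under eq_bigr do rewrite -sum1_count natr_sum mulr_suml big_mkcondr /=.
rewrite exchange_big; apply: eq_bigr => v _; rewrite [RHS]big_mkcond.
by apply: eq_bigr => i _; case: (r v i); rewrite ?mul1r.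
Qed.
End SetSums.

Section TorsionHom.
Variables (Gam G : zmodType) (f : Gam -> G).
Hypothesis f_hom : hom_on (@torsion Gam) f.

Lemma hom_tor0 : f 0 = 0.
Proof. by have := f_hom torsion0 torsion0; rewrite !subrr. Qed.

Lemma hom_torN a : torsion a -> f (- a) = - f a.
Proof. by move=> ta; rewrite -sub0r f_hom ?hom_tor0 ?sub0r //; apply: torsion0. Qed.

Lemma hom_torD a b : torsion a -> torsion b -> f (a + b) = f a + f b.
Proof.
move=> ta tb; have tNb : torsion (- b) by rewrite -sub0r; apply: torsionB torsion0 tb.
by have := f_hom ta tNb; rewrite opprK => ->; rewrite hom_torN // opprK.
Qed.

Lemma hom_torMn a n : torsion a -> f (a *+ n) = f a *+ n.
Proof.
move=> ta; elim: n => [|n IH]; first by rewrite !mulr0n hom_tor0.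
by rewrite !mulrS hom_torD ?IH //; apply: (torsionMz n ta).
Qed.

Lemma hom_torMz a k : torsion a -> f (a *~ k) = f a *~ k.
Proof.
move=> ta; case: k => n; first exact: hom_torMn.
by rewrite !NegzE !mulrNz hom_torN ?hom_torMn //; apply: (torsionMz n.+1 ta).
Qed.
End TorsionHom.

Section Arrangement.
Variables (Gam G : zmodType) (A : seq Gam).
Hypothesis A_tor : forall i : 'I_(size A), torsion A`_i.
Implicit Types (S : {set 'I_(size A)}) (f : Gam -> G).

Lemma in_span_torsion S a : in_span S a -> torsion a.
Proof.
move=> [c ->]; apply: (big_ind (@torsion Gam)); first exact: torsion0.
  exact: torsionD.
by move=> i _; apply: torsionMz.
Qed.

Lemma in_span_nth S i : i \in S -> in_span S A`_i.
Proof.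
move=> iS; exists (fun j => (j == i)%:Z); rewrite (bigD1 i) //= eqxx big1 ?addr0 //.
by move=> j /andP[_ /negbTE ->]; rewrite mulr0z.
Qed.

Lemma tor_modE S : tor_mod S = @torsion Gam.
Proof.
apply/funext => x; apply/propext; split=> [[n [n0 /in_span_torsion [m [m0 hm]]]]|].
  by exists (n * m)%N; rewrite muln_gt0 n0 mulrnA.
move=> [n [n0 hn]]; exists n; split=> //; rewrite hn.
by exists (fun=> 0); rewrite big1 // => i _; rewrite mulr0z.
Qed.

Lemma rank_is0 S : rank_is S 0.
Proof.
split=> [|[|a l] // lS l_indep]; first by exists [::]; split=> //; split=> // c _ [].
have [n [n0 an]] := in_span_torsion (lS a (mem_head a l)).
pose c (i : 'I_(size (a :: l))) : int := if i == ord0 then n%:Z else 0.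
have /(_ ord0) : forall i, c i = 0.
  apply: l_indep; rewrite big_ord_recl /c eqxx /= big1 ?addr0 => [|i _].
    exact: an.
  exact: mulr0z.
by rewrite /c eqxx; case: (n) n0.
Qed.

Lemma rk0 S : rk S = 0%N.
Proof.
have [[l [sl [lS l_indep]]] _] : rank_is S (rk S).
  exact: epsilon_spec (ex_intro _ _ (rank_is0 S)).
by apply/eqP; rewrite -leqn0 -sl; apply: (proj2 (rank_is0 S)) l lS l_indep.
Qed.

Definition zero_set f := [set i : 'I_(size A) | f A`_i == 0].

Lemma hom_vanish_spanE f S : hom_on (@torsion Gam) f ->
  (forall a, in_span S a -> f a = 0) <-> S \subset zero_set f.
Proof.
move=> f_hom; split=> [f0|/subsetP SZ a [c ->]].
  by apply/subsetP => i /in_span_nth/f0; rewrite inE => ->.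
pose K u := torsion u /\ f u = 0.
suff [] : K (\sum_(i in S) A`_i *~ c i) by [].
apply: big_ind; first by split; [apply: torsion0 | apply: hom_tor0].
  move=> u v [tu fu] [tv fv]; split; first exact: torsionD.
  by rewrite hom_torD // fu fv addr0.
move=> i /SZ; rewrite inE => /eqP fAi; split; first exact: torsionMz.
by rewrite hom_torMz // fAi mul0rz.
Qed.

Section Enumeration.
Variables (ts : seq Gam) (gs : seq G).
Hypotheses (ts_uniq : uniq ts) (tsP : forall a, torsion a <-> a \in ts).
Hypothesis gsP : forall f, hom_on (@torsion Gam) f -> forall a, torsion a -> f a \in gs.

Let values := undup (words gs (size ts)).
Let homb (v : seq G) := `[< hom_on (@torsion Gam) (lookup ts v) >].
Let zeros (v : seq G) := zero_set (lookup ts v).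

Lemma count_mod_homs (C : (Gam -> G) -> Prop) (c : pred {set 'I_(size A)}) :
  (forall f, hom_on (@torsion Gam) f -> C f <-> c (zero_set f)) ->
  count_mod (@torsion Gam) (fun f => hom_on (@torsion Gam) f /\ C f) =
  count (fun v => homb v && c (zeros v)) values.
Proof.
move=> CE; rewrite (count_modE (gs := gs) ts_uniq tsP).
- apply: eq_count => v; apply/asboolP/andP => [[hv /(CE _ hv)]|[/asboolP hv /(CE _ hv)]] //.
  by split=> //; apply/asboolP.
- move=> f g fg [hf Cf]; have hg : hom_on (@torsion Gam) g.
    by move=> a b ta tb; rewrite -!fg //; [apply: hf | apply: torsionB].
  split=> //; apply/(CE _ hg); have -> : zero_set g = zero_set f.
    by apply/setP => i; rewrite !inE fg.
  exact/(CE _ hf).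
- by move=> f [hf _]; apply: gsP.
Qed.

Lemma mSG_count S : mSG G S = count (fun v => homb v && (S \subset zeros v)) values.
Proof.
rewrite /mSG tor_modE; apply: (count_mod_homs (c := fun Z => S \subset Z)) => f hf.
exact: hom_vanish_spanE.
Qed.

Lemma McountS_count S : McountS G S = count (fun v => homb v && (zeros v == S)) values.
Proof.
apply: (count_mod_homs (c := fun Z => Z == S)) => f hf; split=> [[/(hom_vanish_spanE S hf)/subsetP SZ nz]|/eqP ZS].
  apply/eqP/setP => i; case iS: (i \in S); first exact: SZ.
  by rewrite inE; apply/negbTE/eqP/nz; rewrite iS.
split; first by apply/(hom_vanish_spanE S hf); rewrite ZS.
by move=> i; rewrite -ZS inE => /eqP.
Qed.

Lemma TutteG_homs (R : comNzRingType) (x y : R) :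
  TutteG G A x y = \sum_(v <- values | homb v) y ^+ #|zeros v|.
Proof.
rewrite /TutteG; under eq_bigr do rewrite !rk0 subnn expr0 mulr1 subn0 mSG_count.
rewrite (sum_count_exchange _ _ (fun v S => S \subset zeros v)).
by apply: eq_bigr => v _; apply: sum_subset_expB1.
Qed.

Lemma sum_McountS (R : comNzRingType) (y : R) :
  \sum_(k < (size A).+1) (\sum_(S : {set 'I_(size A)} | #|S| == k) McountS G S)%:R * y ^+ k =
  \sum_(v <- values | homb v) y ^+ #|zeros v|.
Proof.
transitivity (\sum_(k < (size A).+1)
    \sum_(S : {set 'I_(size A)} | #|S| == k) (McountS G S)%:R * y ^+ #|S|).
  apply: eq_bigr => k _; rewrite natr_sum mulr_suml.
  by apply: eq_bigr => S /eqP ->.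
rewrite sum_by_card ?card_ord //; under eq_bigr do rewrite McountS_count.
rewrite (sum_count_exchange _ _ (fun v S => zeros v == S)).
by apply: eq_bigr => v _; rewrite (big_pred1 (zeros v)) // => S; apply: eq_sym.
Qed.
End Enumeration.
End Arrangement.

Theorem mainTheorem8 (Gam G : zmodType) (A : seq Gam)
  (hGam : fin_gen Gam) (hG : torsionwise_finite G)
  (hA : forall i : 'I_(size A), torsion A`_i)
  (R : comNzRingType) (x y : R) :
  TutteG G A x y =
  \sum_(k < (size A).+1)
     (\sum_(S : {set 'I_(size A)} | #|S| == k) McountS G S)%:R * y ^+ k.
Proof.
have [ts ts_uniq tsP] := torsion_enum hGam.
have [e e_gt0 tsE] := torsion_exponent (fun a => proj2 (tsP a)).
have [gs gsP] := hG e e_gt0.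
have homP f : hom_on (@torsion Gam) f -> forall a, torsion a -> f a \in gs.
  by move=> hf a ta; apply: gsP; rewrite -hom_torMn // tsE ?hom_tor0 //; apply/tsP.
by rewrite (TutteG_homs hA ts_uniq tsP homP) (sum_McountS hA ts_uniq tsP homP).
Qed.
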